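(* Let $\mathcal G$ be a family of connected graphs and $k$ a constant. The following are equivalent: (1) there is a polynomial $p_k$ such that for every $G=(V,E)\in\mathcal G$, a uniformly random spanning tree of $G$ is $k$-splittable with probability at least $1/p_k(|V|)$; (2) there is a polynomial $q_k$ such that for every $G=(V,E)\in\mathcal G$, a random connected $k$-partition of $G$ drawn with probability proportional to its spanning tree weight is balanced with probability at least $1/q_k(|V|)$.
   Context: A tree $T$ is $k$-splittable if there exist $k-1$ edges of $T$ whose removal leaves a forest whose $k$ connected components all have the same number of vertices. A connected $k$-partition of $G=(V,E)$ is a partition of $V$ into $k$ nonempty sets (pieces) each inducing a connected subgraph; it is balanced if all pieces have equal size. For a graph $H$, $\tau(H)$ is its number of spanning trees, and the spanning tree weight of a connected partition $P$ is $\prod_{S\in P}\tau(G[S])$. *)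

From HB Require Import structures.
From mathcomp Require Import all_boot all_order all_algebra.
Set Implicit Arguments. Unset Strict Implicit. Unset Printing Implicit Defensive.
Import Order.TTheory GRing.Theory Num.Theory.

(* Graphs: vertex set a finType T, adjacency a relation g : rel T.
   A simple graph is a symmetric irreflexive relation.  Edges are represented
   as 2-element vertex sets {x, y}. *)

Section Graphs.
Variable T : finType.
Variable g : rel T.

Definition simple_graph : Prop := symmetric g /\ irreflexive g.

Definition gedges : {set {set T}} := [set [set p.1; p.2] | p in [set p : T * T | g p.1 p.2]].

Definition conn_in (F : {set {set T}}) (A : {set T}) (x y : T) : bool :=
  connect [rel u v | [&& u \in A, v \in A & [set u; v] \in F]] x y.

Definition induces_connected (A : {set T}) : Prop :=
  A != set0 /\ forall x y, x \in A -> y \in A -> conn_in gedges A x y.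

Definition connected_graph : Prop := induces_connected [set: T].

Definition spanning_tree_on (A : {set T}) (F : {set {set T}}) : bool :=
  [&& F \subset gedges,
      [forall S in F, S \subset A],
      #|F| == #|A| - 1 &
      [forall x in A, forall y in A, conn_in F A x y]].

Definition tau (A : {set T}) : nat :=
  #|[set F : {set {set T}} | spanning_tree_on A F]|.

Definition spanning_tree (F : {set {set T}}) : bool := spanning_tree_on [set: T] F.

Definition component (F : {set {set T}}) (x : T) : {set T} :=
  [set y | conn_in F [set: T] x y].

Definition k_splittable (k : nat) (F : {set {set T}}) : bool :=
  [exists R : {set {set T}},
     [&& R \subset F, #|R| == k - 1 &
         [forall x, forall y,
            #|component (F :\: R) x| == #|component (F :\: R) y|]]].

Definition connected_kpartition (k : nat) (P : {set {set T}}) : Prop :=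
  partition P [set: T] /\ #|P| = k /\ (forall S, S \in P -> induces_connected S).

Definition balanced (P : {set {set T}}) : bool :=
  [forall S in P, forall S' in P, #|S| == #|S'|].

Definition st_weight (P : {set {set T}}) : nat := \prod_(S in P) tau S.

Definition is_conn_kpart (k : nat) : pred {set {set T}} :=
  fun P => [&& partition P [set: T], #|P| == k &
              [forall S in P, (S != set0) &&
                 [forall x in S, forall y in S, conn_in gedges S x y]]].

Lemma is_conn_kpartP k P : reflect (connected_kpartition k P) (is_conn_kpart k P).
Proof.
apply: (iffP and3P) => [[Hp /eqP Hk /forallP HS]|[Hp [Hk HS]]].
  split=> //; split=> // S SP; have /implyP/(_ SP)/andP[S0 /forallP H] := HS S.
  split=> // x y xS yS; move: (H x) => /implyP/(_ xS)/forallP/(_ y)/implyP; exact.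
split=> //; first by apply/eqP.
apply/forallP=> S; apply/implyP=> SP; have [S0 H] := HS S SP.
apply/andP; split=> //; apply/forallP=> x; apply/implyP=> xS.
by apply/forallP=> y; apply/implyP=> yS; apply: H.
Qed.

Definition prob_splittable (k : nat) : rat :=
  (#|[set F : {set {set T}} | spanning_tree F && k_splittable k F]|%:R
   / #|[set F : {set {set T}} | spanning_tree F]|%:R)%R.

Definition prob_balanced (k : nat) : rat :=
  ((\sum_(P : {set {set T}} | is_conn_kpart k P && balanced P) st_weight P)%:R
   / (\sum_(P : {set {set T}} | is_conn_kpart k P) st_weight P)%:R)%R.

End Graphs.

From mathcomp Require Import all_boot all_order all_algebra zify ring.
Set Implicit Arguments. Unset Strict Implicit. Unset Printing Implicit Defensive.

(* Both probabilities are compared through cut trees: pairs (Tr, R) of a spanning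
   tree Tr and a set R of k - 1 of its edges.  Deleting R from Tr leaves a forest
   with k components, i.e. a connected k-partition together with a spanning tree
   of each piece, and these partitions-with-trees are counted exactly by the
   spanning tree weight.  A cut tree is determined by that forest and R, and every
   partition-with-trees extends to a cut tree by k - 1 edges joining the pieces.
   Since B = (n^2)^(k-1) bounds both C(n-1, k-1) and the number of (k-1)-sets of
   edges, the number of cut trees is within a factor B of the number of spanning
   trees and of the total weight of connected k-partitions; this survives the
   restriction to splittable trees and balanced partitions (which correspond to
   cut trees with equal components).  The two probabilities therefore differ by a
   factor at most B^2, a polynomial in n. *)

Lemma leq_card_rel (X Y : finType) (A : {set X}) (B : {set Y}) (rho : X -> Y -> bool) :
  (forall x, x \in A -> exists2 y, y \in B & rho x y) ->
  (forall x x' y, x \in A -> x' \in A -> rho x y -> rho x' y -> x = x') ->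
  #|A| <= #|B|.
Proof.
move=> ex inj; case: (set_0Vmem A) => [->|[x0 x0A]]; first by rewrite cards0.
have [y0 _ _] := ex x0 x0A.
pose f x := odflt y0 [pick y in B | rho x y].
have fP x : x \in A -> f x \in B /\ rho x (f x).
  move=> xA; rewrite /f; case: pickP => [y /andP[yB r] //|none].
  by have [y yB r] := ex x xA; move: (none y); rewrite yB r.
rewrite -(@card_in_imset _ _ f A); last first.
  move=> x x' xA x'A fxx'; apply: (inj x x' (f x)) => //; first by case: (fP x xA).
  by rewrite fxx'; case: (fP x' x'A).
by apply/subset_leq_card/subsetP => _ /imsetP[x xA ->]; case: (fP x xA).
Qed.

Lemma card_dep_pairs (X Y : finType) (a : pred X) (b : X -> pred Y) :
  #|[set x : X * Y | a x.1 && b x.1 x.2]| = \sum_(i | a i) #|[set y | b i y]|.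
Proof.
rewrite -sum1_card; transitivity (\sum_(i | a i) \sum_(j | b i j) 1).
  by rewrite pair_big_dep; apply: eq_bigl => p; rewrite inE.
by apply: eq_bigr => i _; rewrite -sum1_card; apply: eq_bigl => y; rewrite inE.
Qed.

Lemma card_sum_blocks (I X : finType) (P : {set I}) (A : I -> {set X}) (B : {set X}) :
  (forall i, i \in P -> A i \subset B) ->
  (forall e, e \in B -> exists2 i, i \in P & e \in A i) ->
  (forall i j e, i \in P -> j \in P -> e \in A i -> e \in A j -> i = j) ->
  #|B| = \sum_(i in P) #|A i|.
Proof.
move=> sub ex uniq.
transitivity (\sum_(i in P) \sum_(e in B) (e \in A i : nat)).
  rewrite exchange_big /= -sum1_card; apply: eq_bigr => e eB.
  have [i iP eAi] := ex e eB.
  rewrite (bigD1 i) //= eAi big1 ?addn0 // => j /andP[jP ji].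
  by case eAj: (e \in A j); first by case/eqP: ji; apply: uniq eAj eAi.
apply: eq_bigr => i iP; rewrite -sum1_card big_mkcond [RHS]big_mkcond /=.
apply: eq_bigr => e _; case eA: (e \in A i); last by case: (e \in B).
by rewrite (subsetP (sub i iP) e eA).
Qed.

Lemma setUKD_disjoint (T : finType) (A B : {set T}) : B :&: A = set0 -> (A :|: B) :\: B = A.
Proof. by move=> BA; rewrite setDUl setDv setU0; apply/setDidPl; rewrite -setI_eq0 setIC BA. Qed.

Lemma trivIset_block_eq (T : finType) (P : {set {set T}}) S S' x :
  trivIset P -> S \in P -> S' \in P -> x \in S -> x \in S' -> S = S'.
Proof. by move=> tP SP S'P xS xS'; rewrite -(def_pblock tP SP xS) (def_pblock tP S'P xS'). Qed.

Lemma leq_expn2r a b e : a <= b -> a ^ e <= b ^ e.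
Proof. by case: e => [|e] ab //; rewrite leq_exp2r. Qed.

Lemma leq_bin_exp n m : 'C(n, m) <= n ^ m.
Proof.
have ffact_le n' : n' ^_ m <= n' ^ m.
  elim: m n' => [|m IH] n'; first by rewrite ffactn0 expn0.
  by rewrite ffactnS expnS leq_mul2l (leq_trans (IH _)) ?orbT // leq_expn2r ?leq_pred.
by rewrite (leq_trans _ (ffact_le n)) // -bin_ffact leq_pmulr ?fact_gt0.
Qed.

Definition adj (T : finType) (F : {set {set T}}) : rel T := [rel u v | [set u; v] \in F].
Notation linked F := (connect (adj F)).

Section EdgeConnectivity.
Variable T : finType.
Implicit Types (F : {set {set T}}) (e : rel T).

Lemma connect_ind e (Q : T -> T -> Prop) :
  (forall x, Q x x) -> (forall x y z, e x y -> Q y z -> Q x z) ->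
  forall x y, connect e x y -> Q x y.
Proof.
move=> Q0 QS x y /connectP[p pth ->] {y}.
elim: p x pth => [|z p IH] x /=; first by move=> _; apply: Q0.
by case/andP=> exz pth; apply: (QS _ z) => //; apply: IH.
Qed.

Lemma connect_restrict e e' (P : pred T) x y :
  connect e x y -> P x -> (forall u v, P u -> e u v -> P v /\ e' u v) ->
  connect e' x y.
Proof.
move=> cxy Px H; move: cxy Px.
apply: (connect_ind (Q := fun x y => P x -> connect e' x y)) => // a b c eab IH Pa.
by have [Pb e'ab] := H a b Pa eab; apply: connect_trans (connect1 e'ab) (IH Pb).
Qed.

Lemma connect_min e (Q : rel T) : reflexive Q -> transitive Q ->
  subrel e Q -> subrel (connect e) Q.
Proof.
move=> Qr Qt eQ x y; apply: (connect_ind (Q := Q)) => // a b c eab.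
exact: Qt (eQ _ _ eab).
Qed.

Lemma adj_sym F : symmetric (adj F).
Proof. by move=> u v; rewrite /adj /= setUC. Qed.

Lemma linked_sym F : connect_sym (adj F).
Proof. exact/sym_connect_sym/adj_sym. Qed.

Lemma conn_in_setT F x y : conn_in F [set: T] x y = linked F x y.
Proof. by apply: eq_connect => u v; rewrite /= !in_setT. Qed.

Lemma linkedS F F' : F \subset F' -> subrel (linked F) (linked F').
Proof. by move=> sFF'; apply: connect_sub => u v uvF; apply/connect1/(subsetP sFF'). Qed.

Lemma conn_inS F F' (A A' : {set T}) x y : F \subset F' -> A \subset A' ->
  conn_in F A x y -> conn_in F' A' x y.
Proof.
move=> sFF' sAA'; apply: connect_sub => u v /= /and3P[uA vA uvF]; apply: connect1.
by rewrite /= (subsetP sAA' _ uA) (subsetP sAA' _ vA) (subsetP sFF' _ uvF).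
Qed.

Lemma conn_in_linked F (A : {set T}) x y : conn_in F A x y -> linked F x y.
Proof. by rewrite -conn_in_setT; apply: conn_inS. Qed.

Lemma eq_set2 (u v a b : T) : [set u; v] = [set a; b] ->
  (u = a /\ v = b) \/ (u = b /\ v = a).
Proof.
move=> uv_ab.
have: [&& u \in [set a; b], v \in [set a; b], a \in [set u; v] & b \in [set u; v]].
  by rewrite -uv_ab {3 4}uv_ab !inE !eqxx !orbT.
rewrite !inE => /and4P[/orP[]/eqP-> /orP[]/eqP-> ]; rewrite ?eqxx ?orbb;
  by [left | right | move=> /eqP-> _; left | move=> _ /eqP->; left].
Qed.

Lemma linked_setU1 F a b x y :
  linked ([set a; b] |: F) x y =
  [|| linked F x y, linked F x a && linked F b y | linked F x b && linked F a y].
Proof.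
have symF := linked_sym F.
apply/idP/idP.
- apply: (connect_ind (Q := fun x y => [|| linked F x y, linked F x a && linked F b y
                                         | linked F x b && linked F a y])) => [z|u v w].
    by rewrite connect0.
  rewrite /adj /= !inE => /orP[/eqP/eq_set2[[-> ->]|[-> ->]] | euv].
  + case/or3P=> [lbw|/andP[lba lbw]|/andP[_ law]].
    * by rewrite connect0 lbw orbT.
    * by rewrite (connect_trans _ lbw) // symF.
    * by rewrite law.
  + case/or3P=> [law|/andP[_ lbw]|/andP[lab law]].
    * by rewrite connect0 law !orbT.
    * by rewrite lbw.
    * by rewrite (connect_trans _ law) // symF.
  + have luv : linked F u v by apply: connect1.
    case/or3P=> [lvw|/andP[lva lbw]|/andP[lvb law]].
    * by rewrite (connect_trans luv lvw).
    * by rewrite (connect_trans luv lva) lbw orbT.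
    * by rewrite (connect_trans luv lvb) law !orbT.
- have sub := linkedS (subsetUr [set [set a; b]] F).
  have lab : linked ([set a; b] |: F) a b by apply: connect1; rewrite /adj /= setU11.
  case/or3P=> [/sub //|/andP[/sub lxa /sub lby]|/andP[/sub lxb /sub lay]].
  + exact: connect_trans lxa (connect_trans lab lby).
  + by rewrite (connect_trans lxb (connect_trans _ lay)) // linked_sym.
Qed.

End EdgeConnectivity.

Section Components.
Variable T : finType.
Implicit Types (F : {set {set T}}).

Definition components F := equivalence_partition (linked F) [set: T].
Definition ncomps F := #|components F|.

Lemma in_component F x y : (y \in component F x) = linked F x y.
Proof. by rewrite inE conn_in_setT. Qed.

Lemma mem_component F x : x \in component F x.
Proof. by rewrite in_component connect0. Qed.

Lemma components_partition F : partition (components F) [set: T].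
Proof.
apply: equivalence_partitionP => x y z _ _ _.
by split=> [|lxy]; [apply: connect0 | apply: (same_connect (linked_sym F))].
Qed.

Lemma componentsP F S : reflect (exists x, S = component F x) (S \in components F).
Proof.
have compE x : [set y in [set: T] | linked F x y] = component F x.
  by apply/setP => y; rewrite in_component in_set in_setT.
by apply: (iffP imsetP) => [[x _ ->]|[x ->]]; exists x; rewrite ?compE ?in_setT.
Qed.

Lemma component_in F x : component F x \in components F.
Proof. by apply/componentsP; exists x. Qed.

Lemma eq_component F x y : (component F x == component F y) = linked F x y.
Proof.
apply/eqP/idP => [compE|lxy]; first by rewrite -in_component compE mem_component.
by apply/setP => z; rewrite !in_component (same_connect (linked_sym F) lxy).
Qed.

Lemma eq_components F F' : linked F =2 linked F' -> components F = components F'.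
Proof.
move=> eqF; apply: eq_imset => x.
by apply/setP => y; rewrite !inE eqF.
Qed.

Lemma ncomps_setU1_linked F a b : linked F a b -> ncomps ([set a; b] |: F) = ncomps F.
Proof.
move=> lab; rewrite /ncomps (@eq_components _ F) // => x y; rewrite linked_setU1.
apply/idP/idP => [/or3P[//|/andP[lxa lby]|/andP[lxb lay]]|->//].
  exact: connect_trans (connect_trans lxa lab) lby.
by rewrite (connect_trans lxb (connect_trans _ lay)) // linked_sym.
Qed.

Lemma component_setU1 F a b x : ~~ linked F a b ->
  component ([set a; b] |: F) x =
  if linked F x a || linked F x b then component F a :|: component F b
  else component F x.
Proof.
move=> nab; apply/setP => y; rewrite in_component linked_setU1.
have [lxa|nxa] /= := boolP (linked F x a).
  have -> : linked F x b = false.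
    by apply: contraNF nab; apply: connect_trans; rewrite linked_sym.
  by rewrite in_setU !in_component (same_connect (linked_sym F) lxa) orbF.
have [lxb|nxb] /= := boolP (linked F x b).
  by rewrite in_setU !in_component (same_connect (linked_sym F) lxb) orbC.
by rewrite in_component !orbF.
Qed.

Lemma ncomps_setU1_unlinked F a b : ~~ linked F a b ->
  ncomps F = (ncomps ([set a; b] |: F)).+1.
Proof.
move=> nab; set A := component F a; set B := component F b.
set X := components F :\: [set A; B].
have XP S : S \in X -> exists2 x, S = component F x & ~~ linked F x a && ~~ linked F x b.
  rewrite !inE => /andP[/norP[SA SB] /componentsP[x Sx]].
  by exists x => //; rewrite -!eq_component -Sx SA SB.
have compsF : components F = A |: (B |: X).
  apply/setP => S; rewrite !inE.
  case: (S =P A) => [->|_]; first by rewrite component_in.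
  by case: (S =P B) => [->|_] //=; rewrite component_in.
have compsF' : components ([set a; b] |: F) = (A :|: B) |: X.
  apply/setP => S; apply/componentsP/idP => [[x ->]|].
    rewrite component_setU1 //; case: ifP => [_|nx]; first exact: setU11.
    by rewrite !inE component_in !eq_component nx /= orbT.
  case/setU1P => [->|/XP[x -> /andP[nxa nxb]]].
    by exists a; rewrite component_setU1 // connect0.
  by exists x; rewrite component_setU1 // (negbTE nxa) (negbTE nxb).
have AB_X : A :|: B \notin X.
  apply/negP => /XP[x AB_x /andP[nxa _]].
  have : a \in A :|: B by rewrite inE mem_component.
  by rewrite AB_x in_component (negbTE nxa).
have A_BX : A \notin B |: X by rewrite !inE negb_or eq_component nab /= negb_and negbK eqxx.
have B_X : B \notin X by rewrite !inE negb_and negbK eqxx orbT.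
by rewrite /ncomps compsF compsF' !cardsU1 AB_X A_BX B_X.
Qed.

Lemma ncomps_setU1 F e : ncomps F <= (ncomps (e |: F)).+1 /\ ncomps (e |: F) <= ncomps F.
Proof.
have [[a b] /= /eqP->|ne] := pickP [pred p : T * T | e == [set p.1; p.2]].
  have [lab|nab] := boolP (linked F a b).
    by rewrite ncomps_setU1_linked.
  by rewrite (ncomps_setU1_unlinked nab) leqnn leqnSn.
rewrite /ncomps (@eq_components (e |: F) F) ?leqnSn ?leqnn // => x y.
apply: eq_connect => u v; rewrite /adj /= !inE eq_sym.
by have /= -> := ne (u, v).
Qed.

Lemma ncomps_set0 : ncomps set0 = #|T|.
Proof.
have linked0 x y : linked set0 x y = (x == y).
  apply/idP/idP => [|/eqP->]; last exact: connect0.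
  apply: (connect_min (Q := eq_op)) => [u|u v w|u v]; first exact: eqxx.
    exact: eq_op_trans.
  by rewrite /adj /= inE.
rewrite /ncomps (_ : components set0 = [set [set x] | x in [set: T]]).
  by rewrite card_imset ?cardsT //; apply: set1_inj.
by apply: eq_imset => x; apply/setP => y; rewrite !inE linked0 eq_sym.
Qed.

Lemma leq_ncomps F : #|T| <= ncomps F + #|F|.
Proof.
elim: {F}#|F| {-2}F (erefl #|F|) => [|m IH] F cardF.
  by move/eqP: cardF; rewrite cards_eq0 => /eqP->; rewrite ncomps_set0 cards0 addn0.
have [e eF] : exists e, e \in F by apply/set0Pn; rewrite -card_gt0 cardF.
have [leF _] := ncomps_setU1 (F :\ e) e; rewrite setD1K // in leF.
rewrite (cardsD1 e) eF add1n in cardF.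
by rewrite (cardsD1 e F) eF (leq_trans (IH _ (succn_inj cardF))) // addnS -addSn leq_add2r.
Qed.

(* An edge merges at most two components, so [leq_ncomps] is tight exactly for forests. *)
Definition forest F := ncomps F + #|F| == #|T|.

Lemma forestD1 F e : forest F -> forest (F :\ e).
Proof.
move/eqP => forestF; have [eF|eNF] := boolP (e \in F); last first.
  suff -> : F :\ e = F by rewrite /forest forestF.
  by apply/setP => x; rewrite !inE; case: eqP => // ->; rewrite (negbTE eNF).
rewrite /forest eqn_leq leq_ncomps andbT.
have [leF _] := ncomps_setU1 (F :\ e) e; rewrite setD1K // in leF.
by move: forestF; rewrite (cardsD1 e F) eF add1n addnS => <-; rewrite -addSn leq_add2r.
Qed.

Lemma forestS F F' : F' \subset F -> forest F -> forest F'.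
Proof.
elim: {F}#|F :\: F'| {-2}F (erefl #|F :\: F'|) => [|m IH] F cardFF' sF'F forestF.
  move/eqP: cardFF'; rewrite cards_eq0 setD_eq0 => sFF'.
  by rewrite (_ : F' = F) //; apply/eqP; rewrite eqEsubset sF'F sFF'.
have [e] : exists e, e \in F :\: F' by apply/set0Pn; rewrite -card_gt0 cardFF'.
rewrite inE => /andP[eNF' eF].
apply: (IH (F :\ e)); last exact: forestD1.
  move: cardFF'; rewrite (cardsD1 e) in_setD eF eNF' /= add1n => -[<-].
  by apply: eq_card => x; rewrite !inE andbCA.
by apply/subsetP => x xF'; rewrite !inE (subsetP sF'F) // andbT; apply: contraNneq eNF' => <-.
Qed.

Lemma ncomps1P F : 0 < #|T| -> reflect (forall x y, linked F x y) (ncomps F == 1).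
Proof.
move=> T_gt0; apply: (iffP idP) => [/cards1P[S compsF] x y|lF].
  rewrite -eq_component; have := component_in F x; have := component_in F y.
  by rewrite compsF !inE => /eqP-> /eqP->.
have [x0 _] : exists x0 : T, x0 \in [set: T] by apply/set0Pn; rewrite -card_gt0 cardsT.
apply/cards1P; exists (component F x0); apply/setP => S; rewrite inE.
by apply/componentsP/eqP => [[x ->]|->]; [apply/eqP; rewrite eq_component | exists x0].
Qed.


Lemma conn_in_component F x y z : y \in component F x -> z \in component F x ->
  conn_in [set e in F | e \subset component F x] (component F x) y z.
Proof.
rewrite !in_component => lxy lxz.
have lyz : linked F y z by rewrite (connect_trans _ lxz) // linked_sym.
apply: (connect_restrict (P := mem (component F x))) lyz _ _; first by rewrite /= in_component.
move=> u v; rewrite /= !in_component => lxu; rewrite /adj /= => uvF.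
have lxv : linked F x v by apply: connect_trans lxu (connect1 _).
by rewrite lxu lxv in_set uvF subUset !sub1set !in_component lxu lxv.
Qed.

Lemma component_isolated F (S : {set T}) y : (forall e, e \in F -> e \subset S) -> y \notin S ->
  component F y = [set y].
Proof.
move=> FS yNS; apply/setP => z; rewrite in_component inE.
apply/idP/eqP => [|->]; last exact: connect0.
move=> lyz; move: lyz yNS; apply: (connect_ind (Q := fun y z => y \notin S -> z = y)) => //.
move=> a b c abF _ aNS.
by move: (FS _ abF); rewrite subUset !sub1set (negbTE aNS).
Qed.

Lemma leq_card_connected F (S : {set T}) x0 : x0 \in S -> (forall e, e \in F -> e \subset S) ->
  (forall y z, y \in S -> z \in S -> linked F y z) -> #|S| <= #|F|.+1.
Proof.
move=> x0S FS lS.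
have : ncomps F <= 1 + #|~: S|.
  apply: leq_trans (_ : #|component F x0 |: [set [set y] | y in ~: S]| <= _).
    apply/subset_leq_card/subsetP => C /componentsP[y ->].
    have [yS|yNS] := boolP (y \in S).
      suff -> : component F y = component F x0 by rewrite setU11.
      by apply/eqP; rewrite eq_component linked_sym lS.
    by rewrite (component_isolated FS yNS) !inE imset_f ?orbT // inE.
  by rewrite cardsU1 leq_add ?leq_b1 ?leq_imset_card.
rewrite cardsCs setCK => ncompsF.
by have := leq_ncomps F; have := subset_leq_card (subsetT S); rewrite cardsT; lia.
Qed.

End Components.

Section Graph.
Variables (T : finType) (g : rel T).
Implicit Types (F : {set {set T}}) (S : {set T}).
Local Notation E := (gedges g).

Lemma gedgeP e : reflect (exists2 p : T * T, g p.1 p.2 & e = [set p.1; p.2]) (e \in E).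
Proof.
by apply: (iffP imsetP) => -[p gp ->]; exists p => //; move: gp; rewrite inE.
Qed.

Lemma gedge_set0Pn e : e \in E -> exists u, u \in e.
Proof. by case/gedgeP => p _ ->; exists p.1; rewrite setU11. Qed.

Lemma gedge_component F e : F \subset E -> e \in F ->
  exists2 x, e \in [set e' in F | e' \subset component F x] & x \in e.
Proof.
move=> FE eF; have /gedgeP[[u v] /= _ e_uv] := subsetP FE _ eF.
exists u; last by rewrite e_uv setU11.
rewrite inE eF e_uv subUset !sub1set !in_component connect0 /=.
by apply: connect1; rewrite /adj /= -e_uv.
Qed.

Lemma card_forest_edges F : F \subset E ->
  #|F| = \sum_(S in components F) #|[set e in F | e \subset S]|.
Proof.
move=> FE; have tP : trivIset (components F) by case/and3P: (components_partition F).
apply: card_sum_blocks => [S _|e eF|S S' e SP S'P].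
- by apply/subsetP => e; rewrite inE => /andP[].
- by have [x ex _] := gedge_component FE eF; exists (component F x); rewrite ?component_in.
- rewrite !inE => /andP[eF eS] /andP[_ eS'].
  have [u ue] := gedge_set0Pn (subsetP FE _ eF).
  exact: trivIset_block_eq tP SP S'P (subsetP eS _ ue) (subsetP eS' _ ue).
Qed.

Definition comp_edges F : {ffun {set T} -> {set {set T}}} :=
  [ffun S => if S \in components F then [set e in F | e \subset S] else set0].

Lemma forest_comp_edges F : F \subset E -> forest F ->
  forall S, S \in components F -> spanning_tree_on g S (comp_edges F S).
Proof.
move=> FE forestF.
set P := components F; set A := fun S => [set e in F | e \subset S].
have lbA S : S \in P -> #|S| <= (#|A S|).+1.
  case/componentsP => x ->; apply: (@leq_card_connected _ _ _ x).
  - exact: mem_component.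
  - by move=> e; rewrite inE => /andP[].
  - by move=> y z yS zS; apply: conn_in_linked (conn_in_component yS zS).
(* The bounds [lbA] add up to the forest identity, so they are all tight. *)
have /forall_inP cardA : [forall (S | S \in P), #|S| == (#|A S|).+1].
  rewrite -(leqif_sum (fun S SP => leqif_eq (lbA S SP))).2.
  rewrite -(card_partition (components_partition F)) cardsT -(eqP forestF).
  rewrite /ncomps (card_forest_edges FE) -sum1_card -big_split /=.
  by apply/eqP/eq_bigr => S _; rewrite add1n.
move=> S SP; rewrite ffunE SP; apply/and4P; split.
- by apply/subsetP => e; rewrite inE => /andP[eF _]; apply: (subsetP FE).
- by apply/forall_inP => e; rewrite inE => /andP[].
- by rewrite (eqP (cardA S SP)) subn1.
- case/componentsP: SP => x ->; apply/forall_inP => y yS; apply/forall_inP => z zS.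
  exact: conn_in_component.
Qed.

Hypothesis connected_g : connected_graph g.

Lemma card_vertices_gt0 : 0 < #|T|.
Proof. by case: connected_g => /set0Pn[x _] _; apply/card_gt0P; exists x. Qed.

Lemma connected_linked F : (forall a b, g a b -> linked F a b) -> forall x y, linked F x y.
Proof.
move=> gF x y.
have: conn_in E [set: T] x y by case: connected_g => _; apply; rewrite inE.
apply: connect_sub => u v /and3P[_ _ /gedgeP[[a b] /= gab uv_ab]].
have [[-> ->]|[-> ->]] := eq_set2 uv_ab; first exact: gF.
by rewrite linked_sym; apply: gF.
Qed.

Lemma spanning_tree_props Tr : spanning_tree g Tr ->
  [/\ Tr \subset E, #|Tr| = #|T| - 1 & ncomps Tr = 1].
Proof.
case/and4P => TrE _ /eqP cardTr /forall_inP lTr; split => //; first by rewrite cardTr cardsT.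
apply/eqP/ncomps1P; first exact: card_vertices_gt0.
by move=> x y; rewrite -conn_in_setT; apply/(forall_inP (lTr x _)); rewrite in_setT.
Qed.

Lemma spanning_tree_of F : F \subset E -> #|F| = #|T| - 1 -> ncomps F = 1 ->
  spanning_tree g F.
Proof.
move=> FE cardF /eqP/(ncomps1P _ card_vertices_gt0) lF; apply/and4P; split=> //.
- by apply/forall_inP => e _; apply: subsetT.
- by rewrite cardF cardsT.
- by apply/forall_inP => x _; apply/forall_inP => y _; rewrite conn_in_setT.
Qed.

Lemma spanning_tree_forest Tr : spanning_tree g Tr -> forest Tr.
Proof.
case/spanning_tree_props => _ cardTr ncompsTr; rewrite /forest ncompsTr cardTr.
by have := card_vertices_gt0; lia.
Qed.

Lemma forest_conn_kpart k F : F \subset E -> forest F -> ncomps F = k ->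
  is_conn_kpart g k (components F).
Proof.
move=> FE forestF ncompsF; apply/and3P; split; first exact: components_partition.
  exact/eqP.
apply/forall_inP => S SP; have := forest_comp_edges FE forestF SP.
case/and4P => SE _ _ /forall_inP lS; case/componentsP: SP => x Sx.
apply/andP; split; first by apply/set0Pn; exists x; rewrite Sx mem_component.
apply/forall_inP => y yS; apply/forall_inP => z zS.
exact: conn_inS SE _ (forall_inP (lS y yS) z zS).
Qed.

Lemma exists_connecting_edges m F : ncomps F = m.+1 ->
  exists R : {set {set T}}, [/\ R \subset E, R :&: F = set0, #|R| = m & ncomps (F :|: R) = 1].
Proof.
elim: m F => [|m IH] F ncompsF.
  by exists set0; rewrite sub0set set0I cards0 setU0.
have [[a b] /= /andP[gab nab]|none] :=
  pickP [pred p : T * T | g p.1 p.2 && ~~ linked F p.1 p.2]; last first.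
  suff /(ncomps1P _ card_vertices_gt0) : forall x y, linked F x y by rewrite ncompsF.
  apply: connected_linked => a b gab; apply: contraFT (none (a, b)) => nab.
  by rewrite /= gab.
move: (ncomps_setU1_unlinked nab); rewrite ncompsF => -[/esym/IH[R [RE RF cardR ncompsR]]].
have abE : [set a; b] \in E by apply/gedgeP; exists (a, b).
have abNF : [set a; b] \notin F by apply: contra nab => abF; apply: connect1.
have abNR : [set a; b] \notin R.
  by apply/negP => abR; have := in_set0 [set a; b]; rewrite -RF inE abR setU11.
exists ([set a; b] |: R); split.
- by rewrite subUset sub1set abE RE.
- apply/setP => e; rewrite !inE; apply/negP => /andP[/orP[/eqP-> | eR] eF].
    by rewrite eF in abNF.
  by have := in_set0 e; rewrite -RF inE eR !inE eF orbT.
- by rewrite cardsU1 abNR cardR.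
- by rewrite -ncompsR setUA [F :|: _]setUC.
Qed.

End Graph.

Section Counting.
Variables (T : finType) (g : rel T) (k : nat).
Hypotheses (connected_g : connected_graph g) (k_gt0 : 0 < k).
Implicit Types (F R Tr P : {set {set T}}) (S : {set T}).
Local Notation E := (gedges g).
Local Notation n := #|T|.

Definition tree_families P : pred {ffun {set T} -> {set {set T}}} :=
  family (fun S => if S \in P then [set F | spanning_tree_on g S F] else [set set0]).

Lemma card_tree_families P : #|tree_families P| = st_weight g P.
Proof.
rewrite card_family /st_weight foldrE big_map big_enum [RHS]big_mkcond /=.
by apply: eq_bigr => S _; case: (S \in P); rewrite ?cards1.
Qed.

Definition equal_components F :=
  [forall x, forall y, #|component F x| == #|component F y|].

Lemma equal_componentsE F : equal_components F = balanced (components F).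
Proof.
apply/forallP/forall_inP => [eqF _ /componentsP[x ->]|balF x].
  by apply/forall_inP => _ /componentsP[y ->]; apply: (forallP (eqF x) y).
by apply/forallP => y; apply: (forall_inP (balF _ (component_in F x))); apply: component_in.
Qed.

Lemma bigcup_comp_edges F : F \subset E -> F = \bigcup_(S in components F) comp_edges F S.
Proof.
move=> FE; apply/setP => e; apply/idP/bigcupP => [eF|[S SP]]; last first.
  by rewrite ffunE SP inE => /andP[].
have [x ex _] := gedge_component FE eF.
by exists (component F x); rewrite ?ffunE component_in.
Qed.

Lemma comp_edges_in_families F : F \subset E -> forest F ->
  comp_edges F \in tree_families (components F).
Proof.
move=> FE forestF; apply/familyP => S; case: ifP => SP.
  by rewrite inE; apply: forest_comp_edges.
by rewrite ffunE SP inE.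
Qed.

Lemma cut_forest Tr R : spanning_tree g Tr -> R \subset Tr -> #|R| = k - 1 ->
  [/\ Tr :\: R \subset E, forest (Tr :\: R) & ncomps (Tr :\: R) = k].
Proof.
move=> Tr_tree RTr cardR; have [TrE cardTr _] := spanning_tree_props connected_g Tr_tree.
have forestF : forest (Tr :\: R).
  exact: forestS (subsetDl _ _) (spanning_tree_forest connected_g Tr_tree).
split=> //; first exact: subset_trans (subsetDl _ _) TrE.
move/eqP: forestF; rewrite cardsD (setIidPr RTr) cardTr cardR.
have := subset_leq_card RTr; have := card_vertices_gt0 connected_g.
by rewrite cardTr cardR; lia.
Qed.

Section TreeFamily.
Variables (P : {set {set T}}) (f : {ffun {set T} -> {set {set T}}}).
Hypotheses (kpartP : is_conn_kpart g k P) (f_families : f \in tree_families P).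
Local Notation F := (\bigcup_(S in P) f S).

Let partP : partition P [set: T]. Proof. by case/and3P: kpartP. Qed.
Let trivP : trivIset P. Proof. by case/and3P: partP. Qed.

Lemma family_tree S : S \in P -> spanning_tree_on g S (f S).
Proof. by move=> SP; move/familyP/(_ S): f_families; rewrite SP inE. Qed.

Lemma family_out S : S \notin P -> f S = set0.
Proof. by move=> SNP; move/familyP/(_ S): f_families; rewrite (negbTE SNP) inE => /eqP. Qed.

Lemma family_edge_sub S e : S \in P -> e \in f S -> e \subset S.
Proof. by move=> /family_tree/and4P[_ /forall_inP fS _ _]; apply: fS. Qed.

Lemma family_edges : F \subset E.
Proof. by apply/bigcupsP => S /family_tree/and4P[]. Qed.

Lemma linked_family x y : linked F x y = (y \in pblock P x).
Proof.
have coverP : cover P = [set: T] by case/and3P: partP => /eqP.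
apply/idP/idP => [|yPx].
  apply: (connect_min (Q := fun x y => y \in pblock P x)) => [z|b a c ab bc|u v].
  - by rewrite mem_pblock coverP inE.
  - by rewrite -(same_pblock trivP ab).
  - rewrite /adj /= => /bigcupP[S SP /(family_edge_sub SP)].
    by rewrite subUset !sub1set => /andP[uS vS]; rewrite (def_pblock trivP SP uS).
have xP : x \in cover P by rewrite coverP inE.
have xPx : x \in pblock P x by rewrite mem_pblock.
have /and4P[_ _ _ /forall_inP lPx] := family_tree (pblock_mem xP).
have /forall_inP/(_ y yPx) := lPx x xPx.
by move/conn_in_linked/(linkedS (bigcup_sup _ (pblock_mem xP))).
Qed.

Lemma family_edge_block S S' e : S \in P -> S' \in P -> e \in f S -> e \in f S' -> S = S'.
Proof.
move=> SP S'P eS eS'; have /and4P[fSE _ _ _] := family_tree SP.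
have [u ue] := gedge_set0Pn (subsetP fSE _ eS).
exact: trivIset_block_eq trivP SP S'P (subsetP (family_edge_sub SP eS) _ ue)
                                       (subsetP (family_edge_sub S'P eS') _ ue).
Qed.

Lemma components_family : components F = P.
Proof.
rewrite -[RHS](equivalence_partition_pblock partP); apply: eq_imset => x.
by apply/setP => y; rewrite !inE linked_family.
Qed.

Lemma forest_family : forest F.
Proof.
have [_ _ /forall_inP Pne] := and3P kpartP.
rewrite /forest /ncomps components_family (@card_sum_blocks _ _ P f); first last.
- exact: family_edge_block.
- by move=> e /bigcupP[S SP eS]; exists S.
- by move=> S SP; apply: bigcup_sup.
rewrite -sum1_card -big_split -cardsT (card_partition partP) /=.
apply/eqP/eq_bigr => S SP; have /andP[/set0Pn[x xS] _] := Pne S SP.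
have /and4P[_ _ /eqP-> _] := family_tree SP.
by rewrite subnKC // card_gt0; apply/set0Pn; exists x.
Qed.

Lemma comp_edges_family : comp_edges F = f.
Proof.
apply/ffunP => S; rewrite ffunE components_family.
case: ifP => [SP|/negbT SNP]; last by rewrite family_out.
apply/setP => e; rewrite inE; apply/andP/idP => [[/bigcupP[S' S'P eS'] eS]|eS].
  have /and4P[fS'E _ _ _] := family_tree S'P.
  have [u ue] := gedge_set0Pn (subsetP fS'E _ eS').
  have ueS' := subsetP (family_edge_sub S'P eS') _ ue.
  by rewrite (trivIset_block_eq trivP SP S'P (subsetP eS _ ue) ueS').
by split; [apply: (subsetP (bigcup_sup _ SP)) | apply: family_edge_sub SP eS].
Qed.

End TreeFamily.

(* With [b = true] these are the objects counted in the numerators of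
   [prob_splittable] and [prob_balanced], with [b = false] those in the denominators. *)
Definition cut_trees b := [set x : {set {set T}} * {set {set T}} |
  [&& spanning_tree g x.1, x.2 \subset x.1, #|x.2| == k - 1
    & b ==> equal_components (x.1 :\: x.2)]].

Definition trees b := [set Tr | spanning_tree g Tr && (b ==> k_splittable k Tr)].

Definition tree_partitions b := [set x : {set {set T}} * {ffun {set T} -> {set {set T}}} |
  [&& is_conn_kpart g k x.1, b ==> balanced x.1 & x.2 \in tree_families x.1]].

Definition cut_bound := (n * n) ^ (k - 1).

Lemma card_cut_trees_le_trees b : #|cut_trees b| <= #|trees b| * cut_bound.
Proof.
pose cut Tr R := (R \subset Tr) && (#|R| == k - 1).
apply: leq_trans (_ : #|[set x | (x.1 \in trees b) && cut x.1 x.2]| <= _).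
  apply/subset_leq_card/subsetP => -[Tr R]; rewrite !inE /=.
  case/and4P => -> RTr cardR eqR; rewrite /cut RTr cardR andbT.
  by case: b eqR => //= eqR; rewrite andbT; apply/existsP; exists R; rewrite RTr cardR.
rewrite (card_dep_pairs (fun Tr => Tr \in trees b) cut) -sum_nat_const leq_sum //.
move=> Tr; rewrite inE => /andP[Tr_tree _].
have [_ cardTr _] := spanning_tree_props connected_g Tr_tree.
rewrite cards_draws cardTr (leq_trans (leq_bin_exp _ _)) // leq_expn2r //.
by have := card_vertices_gt0 connected_g; nia.
Qed.

Lemma card_trees_le_cut_trees b : k <= n -> #|trees b| <= #|cut_trees b|.
Proof.
move=> k_le_n; apply: (@leq_card_rel _ _ _ _ (fun Tr x => x.1 == Tr)); last first.
  by move=> Tr Tr' x _ _ /eqP<- /eqP.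
move=> Tr; rewrite inE => /andP[Tr_tree splitTr].
suff [R /and3P[RTr cardR eqR]] : exists R : {set {set T}}, [&& R \subset Tr, #|R| == k - 1
                                             & b ==> equal_components (Tr :\: R)].
  by exists (Tr, R); rewrite // inE /= Tr_tree RTr cardR.
case: b splitTr => /= [/existsP[R /and3P[RTr cardR eqR]]|_]; first by exists R; rewrite RTr cardR.
have [_ cardTr _] := spanning_tree_props connected_g Tr_tree.
have : 0 < #|[set R : {set {set T}} | R \subset Tr & #|R| == k - 1]|.
  by rewrite cards_draws bin_gt0 cardTr; have := card_vertices_gt0 connected_g; lia.
by case/card_gt0P => R; rewrite inE => /andP[RTr cardR]; exists R; rewrite RTr cardR.
Qed.

Lemma card_cut_trees_le_partitions b : #|cut_trees b| <= #|tree_partitions b| * cut_bound.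
Proof.
set cuts := [set R : {set {set T}} | R \subset E & #|R| == k - 1].
have card_cuts : #|cuts| <= cut_bound.
  rewrite cards_draws (leq_trans (leq_bin_exp _ _)) // leq_expn2r //.
  by rewrite (leq_trans (leq_imset_card _ _)) // -card_prod max_card.
apply: leq_trans (_ : #|setX (tree_partitions b) cuts| <= _); last first.
  by rewrite cardsX leq_mul2l card_cuts orbT.
pose decompose (x : {set {set T}} * {set {set T}}) :=
  (components (x.1 :\: x.2), comp_edges (x.1 :\: x.2), x.2).
apply: (@leq_card_rel _ _ _ _ (fun x y => y == decompose x)).
  move=> [Tr R]; rewrite inE /= => /and4P[Tr_tree RTr /eqP cardR eqR].
  have [FE forestF ncompsF] := cut_forest Tr_tree RTr cardR.
  exists (decompose (Tr, R)) => //; apply/setXP; split; last first.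
    have [TrE _ _] := spanning_tree_props connected_g Tr_tree.
    by rewrite inE (subset_trans RTr TrE) cardR eqxx.
  rewrite inE /= forest_conn_kpart ?comp_edges_in_families //=.
  by rewrite andbT -equal_componentsE.
move=> [Tr R] [Tr' R'] y; rewrite !inE /=.
move=> /and4P[Tr_tree RTr _ _] /and4P[Tr'_tree R'Tr' _ _] /eqP-> /eqP[eF eC eR].
subst R'.
have [TrE _ _] := spanning_tree_props connected_g Tr_tree.
have [Tr'E _ _] := spanning_tree_props connected_g Tr'_tree.
have eqF : Tr :\: R = Tr' :\: R.
  rewrite (bigcup_comp_edges (subset_trans (subsetDl _ _) TrE)).
  by rewrite (bigcup_comp_edges (subset_trans (subsetDl _ _) Tr'E)) eF eC.
by rewrite -(setID Tr R) -(setID Tr' R) (setIidPr RTr) (setIidPr R'Tr') eqF.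
Qed.

Lemma card_partitions_le_cut_trees b : #|tree_partitions b| <= #|cut_trees b|.
Proof.
apply: (@leq_card_rel _ _ _ _ (fun (x : {set {set T}} * {ffun {set T} -> {set {set T}}})
                                    (y : {set {set T}} * {set {set T}}) =>
                                  y.1 :\: y.2 == \bigcup_(S in x.1) x.2 S)); last first.
  move=> [P f] [P' f'] [Tr R]; rewrite !inE /= => /and3P[kP _ fP] /and3P[kP' _ fP'].
  move=> /eqP eF /eqP eF'.
  have eqF : \bigcup_(S in P) f S = \bigcup_(S in P') f' S by rewrite -eF -eF'.
  have eqPP' : P = P'.
    by rewrite -(components_family kP fP) -(components_family kP' fP') eqF.
  subst P'; congr (_, _).
  by rewrite -(comp_edges_family kP fP) -(comp_edges_family kP' fP') eqF.
move=> [P f]; rewrite inE /= => /and3P[kP balP fP].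
set F := \bigcup_(S in P) f S.
have [FE forestF] := (family_edges fP, forest_family kP fP).
have ncompsF : ncomps F = k.
  by rewrite /ncomps components_family //; case/and3P: kP => _ /eqP.
have ncompsF' : ncomps F = (k - 1).+1 by rewrite ncompsF; lia.
have [R [RE RF cardR ncompsFR]] := exists_connecting_edges connected_g ncompsF'.
exists (F :|: R, R); last by rewrite /= setUKD_disjoint.
rewrite inE /= setUKD_disjoint // subsetUr cardR eqxx equal_componentsE.
rewrite components_family // balP !andbT.
apply: (spanning_tree_of connected_g) ncompsFR; first by rewrite subUset FE RE.
move/eqP: forestF; rewrite cardsU setIC RF cards0 subn0 cardR ncompsF.
by rewrite -/F; have := card_vertices_gt0 connected_g; lia.
Qed.

Lemma card_trees_le_partitions b : k <= n -> #|trees b| <= #|tree_partitions b| * cut_bound.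
Proof.
move=> k_le_n; apply: leq_trans (card_trees_le_cut_trees b k_le_n) _.
exact: card_cut_trees_le_partitions.
Qed.

Lemma card_partitions_le_trees b : #|tree_partitions b| <= #|trees b| * cut_bound.
Proof. exact: leq_trans (card_partitions_le_cut_trees b) (card_cut_trees_le_trees b). Qed.

Lemma k_le_of_trees : 0 < #|trees true| -> k <= n.
Proof.
case/card_gt0P => Tr; rewrite inE => /andP[Tr_tree /existsP[R /and3P[RTr /eqP cardR _]]].
have [_ cardTr _] := spanning_tree_props connected_g Tr_tree.
have := subset_leq_card RTr; have := card_vertices_gt0 connected_g.
by rewrite cardTr cardR; lia.
Qed.

Lemma k_le_of_partitions b : 0 < #|tree_partitions b| -> k <= n.
Proof.
case/card_gt0P => -[P f]; rewrite inE /= => /and3P[/and3P[partP /eqP <- /forall_inP Pne] _ _].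
rewrite -cardsT (card_partition partP) -sum1_card leq_sum // => S SP.
by have /andP[/set0Pn[x xS] _] := Pne S SP; apply/card_gt0P; exists x.
Qed.

Lemma card_trees_mono : #|trees true| <= #|trees false|.
Proof. by apply/subset_leq_card/subsetP => Tr; rewrite !inE => /andP[-> _]. Qed.

Lemma card_partitions_mono : #|tree_partitions true| <= #|tree_partitions false|.
Proof. by apply/subset_leq_card/subsetP => x; rewrite !inE /= => /and3P[-> _ ->]. Qed.

Lemma card_tree_partitions b : #|tree_partitions b| =
  \sum_(P | is_conn_kpart g k P && (b ==> balanced P)) st_weight g P.
Proof.
transitivity (\sum_(P | is_conn_kpart g k P && (b ==> balanced P))
                #|[set f | f \in tree_families P]|).
  by rewrite -card_dep_pairs; apply: eq_card => x; rewrite !inE andbA.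
by apply: eq_bigr => P _; rewrite -card_tree_families; apply: eq_card => f; rewrite inE.
Qed.

Lemma prob_splittableE : prob_splittable g k = (#|trees true|%:R / #|trees false|%:R)%R.
Proof.
by rewrite /prob_splittable; congr (_%:R / _%:R)%R; apply: eq_card => F; rewrite !inE ?andbT.
Qed.

Lemma prob_balancedE :
  prob_balanced g k = (#|tree_partitions true|%:R / #|tree_partitions false|%:R)%R.
Proof.
rewrite /prob_balanced !card_tree_partitions; congr (_%:R / _%:R)%R.
by apply: eq_bigl => P; rewrite andbT.
Qed.

End Counting.

Import Order.TTheory GRing.Theory Num.Theory.
Local Open Scope ring_scope.

Lemma ratio_transfer (p : rat) (a b c d B : nat) :
  0 < p -> p^-1 <= a%:R / b%:R -> (c <= d)%N ->
  ((0 < a)%N -> (a <= c * B)%N /\ (d <= b * B)%N) ->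
  0 < p * B%:R * B%:R /\ (p * B%:R * B%:R)^-1 <= c%:R / d%:R.
Proof.
move=> p_gt0 le_p_ab le_cd bounds.
have ab_gt0 : 0 < a%:R / b%:R :> rat by apply: lt_le_trans le_p_ab; rewrite invr_gt0.
have [a_gt0 b_gt0] : (0 < a)%N /\ (0 < b)%N.
  by move: ab_gt0; case: (a) (b) => [|a'] [|b']; rewrite ?mul0r ?invr0 ?mulr0 ?ltxx.
have [le_a_cB le_d_bB] := bounds a_gt0.
have cB_gt0 : (0 < c * B)%N := leq_trans a_gt0 le_a_cB.
have [c_gt0 B_gt0] : (0 < c)%N /\ (0 < B)%N by move: cB_gt0; rewrite muln_gt0 => /andP.
have d_gt0 : (0 < d)%N := leq_trans c_gt0 le_cd.
split; first by rewrite !mulr_gt0 ?ltr0n.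
move: le_p_ab; rewrite ler_pdivlMr ?ltr0n // mulrC ler_pdivrMr // => le_b_ap.
rewrite ler_pdivlMr ?ltr0n // mulrC ler_pdivrMr ?mulr_gt0 ?ltr0n //.
have le_d_apB : d%:R <= a%:R * p * B%:R :> rat.
  apply: le_trans (_ : (b * B)%:R <= _); first by rewrite ler_nat.
  by rewrite natrM ler_pM2r ?ltr0n.
have -> : c%:R * (p * B%:R * B%:R) = (c * B)%:R * p * B%:R :> rat by rewrite natrM; ring.
by apply: le_trans le_d_apB _; rewrite ler_pM2r ?ltr0n // ler_pM2r // ler_nat.
Qed.

Section ProbabilityComparison.
Variables (T : finType) (g : rel T) (k : nat).
Hypotheses (connected_g : connected_graph g) (k_gt0 : (0 < k)%N).
Local Notation B := (cut_bound T k).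

Lemma prob_balanced_ge (p : rat) : 0 < p -> p^-1 <= prob_splittable g k ->
  0 < p * B%:R * B%:R /\ (p * B%:R * B%:R)^-1 <= prob_balanced g k.
Proof.
rewrite prob_splittableE prob_balancedE => p_gt0 le_p.
apply: ratio_transfer p_gt0 le_p (card_partitions_mono g k) _ => trees_gt0.
split; last exact: card_partitions_le_trees.
by apply: card_trees_le_partitions => //; apply: k_le_of_trees trees_gt0.
Qed.

Lemma prob_splittable_ge (p : rat) : 0 < p -> p^-1 <= prob_balanced g k ->
  0 < p * B%:R * B%:R /\ (p * B%:R * B%:R)^-1 <= prob_splittable g k.
Proof.
rewrite prob_splittableE prob_balancedE => p_gt0 le_p.
apply: ratio_transfer p_gt0 le_p (card_trees_mono g k) _ => partitions_gt0.
split; first exact: card_partitions_le_trees.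
by apply: card_trees_le_partitions => //; apply: k_le_of_partitions partitions_gt0.
Qed.

End ProbabilityComparison.

Theorem mainTheorem7 (Fam : forall n : nat, rel 'I_n -> Prop) (k : nat) :
  (0 < k)%N ->
  (forall n (g : rel 'I_n), Fam n g -> simple_graph g /\ connected_graph g) ->
  (exists p : {poly rat}, forall n (g : rel 'I_n), Fam n g ->
      0 < p.[n%:R] /\ (p.[n%:R])^-1 <= prob_splittable g k)
  <->
  (exists q : {poly rat}, forall n (g : rel 'I_n), Fam n g ->
      0 < q.[n%:R] /\ (q.[n%:R])^-1 <= prob_balanced g k).
Proof.
move=> k_gt0 Fam_connected.
pose scale (p : {poly rat}) := p * ('X * 'X) ^+ (k - 1) * ('X * 'X) ^+ (k - 1).
have scaleE p n : (scale p).[n%:R] = p.[n%:R] * (cut_bound 'I_n k)%:R * (cut_bound 'I_n k)%:R.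
  by rewrite !hornerM !horner_exp hornerM hornerX /cut_bound card_ord natrX natrM.
split=> -[p le_p]; exists (scale p) => n g Fam_g; rewrite scaleE;
  have [_ connected_g] := Fam_connected n g Fam_g; have [p_gt0 le_pg] := le_p n g Fam_g.
- exact: prob_balanced_ge.
- exact: prob_splittable_ge.
Qed.
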